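(* Let $\mathcal A=(\Sigma,Q^\mathcal A,q^\mathcal A_0,\Omega^\mathcal A,\Delta^\mathcal A)$ and $\mathcal B=(\Sigma,Q^\mathcal B,q^\mathcal B_0,\Omega^\mathcal B,\Delta^\mathcal B)$ be nondeterministic parity tree automata with $L(\mathcal A)\cap L(\mathcal B)=\emptyset$. Then there is a function $\mathcal P:\bigcup_{a\in\Sigma}\Delta^\mathcal A(a)\times\Delta^\mathcal B(a)\to\{\mathsf L,\mathsf R\}$ such that Pathfinder wins every play of the disjointness game $G_\cap(\mathcal A,\mathcal B)$ in which she always plays $d_i:=\mathcal P(\delta^\mathcal A_i,\delta^\mathcal B_i)$.
   Context: Trees are maps $t:\{\mathsf L,\mathsf R\}^*\to\Sigma$. A nondeterministic parity tree automaton $(\Sigma,Q,q_0,\Omega,\Delta)$ has $\Omega:Q\to\mathbb N$ and $\Delta\subseteq Q\times\Sigma\times Q\times Q$; a run on $t$ is $\rho$ with $\rho(\epsilon)=q_0$ and $(\rho(u),t(u),\rho(u\mathsf L),\rho(u\mathsf R))\in\Delta$, accepting if on every branch the maximal priority seen infinitely often is even; $L(\cdot)$ denotes the recognised language. The priority of a transition $(q,a,q_\mathsf L,q_\mathsf R)$ is $\Omega(q)$, and an infinite sequence of transitions is accepting if the maximal priority occurring infinitely often is even. $\Delta(a)$ is the set of transitions over letter $a$, and $\Delta(q,a)$ those from state $q$ over $a$. All states of the automata are assumed productive ($L(\mathcal A_q)\neq\emptyset$ for each state $q$, where $\mathcal A_q$ has initial state $q$). Disjointness game $G_\cap(\mathcal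 A,\mathcal B)$: positions are pairs $(q^\mathcal A_i,q^\mathcal B_i)$, starting at $(q_0^\mathcal A,q_0^\mathcal B)$. In round $i$, player Automaton chooses a letter $a_i\in\Sigma$, a transition $\delta^\mathcal A_i=(q^\mathcal A_i,a_i,q^\mathcal A_{\mathsf L,i},q^\mathcal A_{\mathsf R,i})\in\Delta^\mathcal A(q^\mathcal A_i,a_i)$ and a transition $\delta^\mathcal B_i=(q^\mathcal B_i,a_i,q^\mathcal B_{\mathsf L,i},q^\mathcal B_{\mathsf R,i})\in\Delta^\mathcal B(q^\mathcal B_i,a_i)$; then player Pathfinder chooses $d_i\in\{\mathsf L,\mathsf R\}$; the next position is $(q^\mathcal A_{d_i,i},q^\mathcal B_{d_i,i})$. Automaton wins an infinite play iff both sequences $\delta^\mathcal A_0\delta^\mathcal A_1\cdots$ and $\delta^\mathcal B_0\delta^\mathcal B_1\cdots$ are accepting; otherwise Pathfinder wins. *)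

From mathcomp Require Import all_boot.
Set Implicit Arguments. Unset Strict Implicit. Unset Printing Implicit Defensive.

Inductive dir := DL | DR.

Definition tree (Sigma : Type) := seq dir -> Sigma.

Record npta (Sigma : finType) := NPTA {
  state : finType;
  q0 : state;
  Omega : state -> nat;
  Delta : state -> Sigma -> state -> state -> Prop }.

Record trans (Q Sigma : Type) := Trans { tsrc : Q; tlet : Sigma; tL : Q; tR : Q }.

Definition transition (Sigma : finType) (A : npta Sigma) := trans (state A) Sigma.

Definition in_Delta (Sigma : finType) (A : npta Sigma) (d : transition A) : Prop :=
  Delta d.(tsrc) d.(tlet) d.(tL) d.(tR).

Definition tgt (Q Sigma : Type) (d : trans Q Sigma) (x : dir) : Q :=
  match x with DL => tL d | DR => tR d end.

(* Parity condition on a priority sequence: the maximal priority occurring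
   infinitely often is even (s has finite range in our uses). *)
Definition parity_acc (s : nat -> nat) : Prop :=
  exists m, ~~ odd m /\ (forall N, exists n, N <= n /\ s n = m)
            /\ (exists N, forall n, N <= n -> s n <= m).

Definition is_run_from (Sigma : finType) (A : npta Sigma) (q : state A)
    (t : tree Sigma) (rho : seq dir -> state A) : Prop :=
  rho [::] = q /\
  forall u, Delta (rho u) (t u) (rho (rcons u DL)) (rho (rcons u DR)).

Definition prefix (pi : nat -> dir) (n : nat) : seq dir := mkseq pi n.

Definition accepting_run (Sigma : finType) (A : npta Sigma)
    (rho : seq dir -> state A) : Prop :=
  forall pi : nat -> dir, parity_acc (fun n => Omega (rho (prefix pi n))).

Definition accepts_from (Sigma : finType) (A : npta Sigma) (q : state A)
    (t : tree Sigma) : Prop :=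
  exists rho, is_run_from q t rho /\ accepting_run rho.

Definition accepts (Sigma : finType) (A : npta Sigma) (t : tree Sigma) : Prop :=
  accepts_from (q0 A) t.

Definition productive (Sigma : finType) (A : npta Sigma) : Prop :=
  forall q : state A, exists t, accepts_from q t.

Definition trans_seq_acc (Sigma : finType) (A : npta Sigma)
    (ds : nat -> transition A) : Prop :=
  parity_acc (fun i => Omega (tsrc (ds i))).

(* An infinite play of G_cap(A,B) in which Pathfinder always plays
   d_i := P(delta^A_i, delta^B_i); described by the sequences of transitions
   chosen by Automaton (letter a_i = common letter of the two transitions). *)
Definition play_following (Sigma : finType) (A B : npta Sigma)
    (P : transition A -> transition B -> dir)
    (dA : nat -> transition A) (dB : nat -> transition B) : Prop :=
  tsrc (dA 0) = q0 A /\ tsrc (dB 0) = q0 B /\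
  forall i,
    [/\ in_Delta (dA i), in_Delta (dB i), tlet (dA i) = tlet (dB i),
        tsrc (dA i.+1) = tgt (dA i) (P (dA i) (dB i)) &
        tsrc (dB i.+1) = tgt (dB i) (P (dA i) (dB i))].

Definition pathfinder_wins (Sigma : finType) (A B : npta Sigma)
    (dA : nat -> transition A) (dB : nat -> transition B) : Prop :=
  ~ (trans_seq_acc dA /\ trans_seq_acc dB).

(* We prove a stronger, parametrised statement by induction on the finitely
   many moves of Automaton (pairs of transitions).  A partial positional
   strategy [F] fixes Pathfinder's answer on some moves; [dichotomy F] says
   that some positional strategy [P] extending [F] wins from every position
   from which Automaton has no strategy tree winning against all behaviours of
   Pathfinder allowed by [F].  When [F] is total this is immediate.  Otherwise
   we fix an open move [t0] to L and to R and use the two induction hypotheses: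
   either the R-strategy already wins after [t0], so winning trees never play
   [t0] and it serves for [F], or Automaton wins after [t0] answered by R, and
   shuffling that tree with trees winning against the L-fixed strategy yields
   trees winning against [F].  Acceptance of shuffled plays rests on a lemma
   about parity conditions of interleaved sequences.  For the empty [F], a tree
   winning from the initial position labels a tree accepted by both automata,
   so disjointness leaves Pathfinder's positional strategy winning. *)

From Pilot Require Import Defs.
From HB Require Import structures.
From mathcomp Require Import all_boot zify.
From Stdlib Require Import Classical ClassicalEpsilon.

Set Implicit Arguments. Unset Strict Implicit. Unset Printing Implicit Defensive.

(* [prefix] is also a boolean predicate of seq; we refer to the branch prefix. *)
Local Notation pref := Defs.prefix.

Lemma size_pref pi n : size (pref pi n) = n.
Proof. exact: size_mkseq. Qed.

Lemma prefS pi n : pref pi n.+1 = rcons (pref pi n) (pi n).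
Proof. exact: mkseqS. Qed.

Lemma nth_pref pi n i : i < n -> nth DL (pref pi n) i = pi i.
Proof. exact: nth_mkseq. Qed.

Lemma take_pref pi n i : i <= n -> take i (pref pi n) = pref pi i.
Proof.
move=> le_in; apply: (@eq_from_nth _ DL); first by rewrite size_takel size_pref.
move=> j; rewrite size_takel ?size_pref // => lt_ji.
by rewrite nth_take // !nth_pref //; lia.
Qed.

Definition graft (v : seq dir) (pi : nat -> dir) (n : nat) : dir :=
  if n < size v then nth DL v n else pi (n - size v).

Lemma pref_graft_short v pi n : n <= size v -> pref (graft v pi) n = take n v.
Proof.
move=> le_n; apply: (@eq_from_nth _ DL); first by rewrite size_pref size_takel.
by move=> i; rewrite size_pref => lt_i; rewrite nth_pref // nth_take // /graft ifT //; lia.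
Qed.

Lemma pref_graft_long v pi k : pref (graft v pi) (size v + k) = v ++ pref pi k.
Proof.
elim: k => [|k IH]; first by rewrite addn0 cats0 pref_graft_short // take_size.
by rewrite addnS !prefS IH rcons_cat /graft ltnNge leq_addr /= addKn.
Qed.

Lemma parity_acc_shift (g a : nat -> nat) (N K C : nat) :
  parity_acc g -> (forall n, N <= n -> a (n + C) = g (n + K)) -> parity_acc a.
Proof.
move=> [m [even_m [often [N' bound]]]] a_g; exists m; split=> //; split.
  move=> M; have [n [le_n gn]] := often (M + N + K).
  exists (n - K + C); split; first lia.
  by rewrite a_g; [rewrite subnK //; lia | lia].
exists (N + N' + C) => n le_n.
have -> : n = n - C + C by lia.
by rewrite a_g; [apply: bound | ]; lia.
Qed.

Definition unbounded (c : nat -> nat) := forall k, exists n, k < c n.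

Section Counter.
Variables (b : nat -> bool) (c : nat -> nat).
Hypothesis c0 : c 0 = 0.
Hypothesis cS : forall n, c n.+1 = c n + b n.

Lemma counter_mono : {homo c : m n / m <= n}.
Proof.
apply: homo_leq => [//|n m p|n]; first exact: leq_trans.
by rewrite cS leq_addr.
Qed.

Lemma counter_hit k n : k < c n -> exists2 m, c m = k & b m.
Proof.
elim: n => [|n IH]; first by rewrite c0.
case: (ltnP k (c n)) => [/IH //|le_cn]; rewrite cS.
by case b_n: (b n) => /= lt_k; [exists n => //; lia | lia].
Qed.

Lemma counter_dichotomy :
  unbounded c \/ exists N, forall n, N <= n -> c n = c N.
Proof.
case: (classic (exists N, forall n, N <= n -> c n = c N)) => [|stable]; [by right|left].
have grows N : exists2 n, N <= n & c N < c n.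
  apply: NNPP => no_growth; apply: stable; exists N => n le_Nn.
  have := counter_mono le_Nn; rewrite leq_eqVlt => /orP[/eqP //|lt_c].
  by case: no_growth; exists n.
elim=> [|k [n lt_kn]]; first by have [n _ ?] := grows 0; exists n; lia.
by have [n' _ ?] := grows n; exists n'; lia.
Qed.

End Counter.

Section Interleaving.
(* [a] interleaves [g1] and [g2]: at step [n] it shows the next entry of [g1]
   if [b n] holds and the next entry of [g2] otherwise; [c1], [c2] count how
   far each of them has been consumed. *)
Variables (b : nat -> bool) (c1 c2 g1 g2 a : nat -> nat).
Hypotheses (c1_0 : c1 0 = 0) (c2_0 : c2 0 = 0).
Hypothesis c1S : forall n, c1 n.+1 = c1 n + b n.
Hypothesis c2S : forall n, c2 n.+1 = c2 n + ~~ b n.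
Hypothesis a_def : forall n, a n = if b n then g1 (c1 n) else g2 (c2 n).

Lemma counters_sum n : c1 n + c2 n = n.
Proof. by elim: n => [|n IH]; rewrite ?c1_0 ?c2_0 // c1S c2S; case: (b n) => /=; lia. Qed.

(* If [g2] is eventually no longer consumed, [a] is eventually a shift of [g1]. *)
Lemma interleave_one_side :
  (exists N, forall n, N <= n -> c2 n = c2 N) ->
  (unbounded c1 -> parity_acc g1) -> parity_acc a.
Proof.
move=> [N c2_const] acc1.
have b_late n : N <= n -> b n.
  move=> le_Nn; have := c2_const n.+1 (leqW le_Nn).
  by rewrite c2S c2_const //; case: (b n) => //=; lia.
have c1_late n : N <= n -> c1 n = n - c2 N.
  by move=> le_Nn; have := counters_sum n; rewrite c2_const //; lia.
apply: (@parity_acc_shift g1 a N 0 (c2 N)).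
  by apply: acc1 => k; exists (k + N + c2 N).+1; rewrite c1_late; lia.
by move=> n le_Nn; rewrite a_def b_late ?c1_late ?addn0 ?addnK //; lia.
Qed.

Lemma interleave_often1 v :
  unbounded c1 -> (forall M, exists k, M <= k /\ g1 k = v) ->
  forall M, exists n, M <= n /\ a n = v.
Proof.
move=> unb1 often M; have [k [le_Mk g1k]] := often M; have [n lt_kn] := unb1 k.
have [m c1m bm] := counter_hit c1_0 c1S lt_kn.
by exists m; rewrite a_def bm c1m; have := counters_sum m; split=> //; lia.
Qed.

Lemma interleave_often2 v :
  unbounded c2 -> (forall M, exists k, M <= k /\ g2 k = v) ->
  forall M, exists n, M <= n /\ a n = v.
Proof.
move=> unb2 often M; have [k [le_Mk g2k]] := often M; have [n lt_kn] := unb2 k.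
have [m c2m bm] := counter_hit c2_0 c2S lt_kn.
by exists m; rewrite a_def (negbTE bm) c2m; have := counters_sum m; split=> //; lia.
Qed.

(* If both components are consumed infinitely often, the maximal priority seen
   infinitely often in [a] is the larger of those of [g1] and [g2]. *)
Lemma interleave_both :
  unbounded c1 -> unbounded c2 -> parity_acc g1 -> parity_acc g2 -> parity_acc a.
Proof.
move=> unb1 unb2 [k1 [ev1 [often1 [N1 bound1]]]] [k2 [ev2 [often2 [N2 bound2]]]].
exists (maxn k1 k2); split; first by rewrite /maxn; case: ltnP.
split.
  by case: (leqP k2 k1) => _; [apply: interleave_often1 | apply: interleave_often2].
have [n1 lt1] := unb1 N1; have [n2 lt2] := unb2 N2.
exists (n1 + n2) => n le_n; rewrite a_def; case: (b n).
  by have := counter_mono c1S (_ : n1 <= n); have := bound1 (c1 n); lia.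
by have := counter_mono c2S (_ : n2 <= n); have := bound2 (c2 n); lia.
Qed.

End Interleaving.

Lemma interleave_parity (b : nat -> bool) (c1 c2 g1 g2 a : nat -> nat) :
  c1 0 = 0 -> c2 0 = 0 ->
  (forall n, c1 n.+1 = c1 n + b n) -> (forall n, c2 n.+1 = c2 n + ~~ b n) ->
  (forall n, a n = if b n then g1 (c1 n) else g2 (c2 n)) ->
  (unbounded c1 -> parity_acc g1) -> (unbounded c2 -> parity_acc g2) ->
  parity_acc a.
Proof.
move=> c1_0 c2_0 c1S c2S a_def acc1 acc2.
have c1S' n : c1 n.+1 = c1 n + ~~ ~~ b n by rewrite negbK.
have a_def' n : a n = if ~~ b n then g2 (c2 n) else g1 (c1 n).
  by rewrite a_def; case: (b n).
case: (counter_dichotomy c2_0 c2S) => [unb2|const2].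
  case: (counter_dichotomy c1_0 c1S) => [unb1|const1].
    exact: (interleave_both c1_0 c2_0 c1S c2S a_def unb1 unb2 (acc1 unb1) (acc2 unb2)).
  exact: (interleave_one_side c2_0 c1_0 c2S c1S' a_def' const1 acc2).
exact: (interleave_one_side c1_0 c2_0 c1S c2S a_def const2 acc1).
Qed.

Lemma extending_words_branch (H : nat -> seq dir) :
  (forall n, exists w, H n.+1 = H n ++ w) ->
  exists pi, forall n, H n = pref pi (size (H n)).
Proof.
move=> extS.
have ext n m : n <= m -> exists w, H m = H n ++ w.
  elim: m => [|m IH]; first by rewrite leqn0 => /eqP->; exists [::]; rewrite cats0.
  rewrite leq_eqVlt ltnS => /orP[/eqP->|/IH[w Hm]]; first by exists [::]; rewrite cats0.
  by have [w' ->] := extS m; exists (w ++ w'); rewrite Hm catA.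
(* [long k] is some index at which the word is longer than [k], if any. *)
pose long k := epsilon (inhabits 0) (fun n => k < size (H n)).
have long_spec k n : k < size (H n) -> k < size (H (long k)).
  by move=> lt_k; apply: (epsilon_spec (inhabits 0) (fun n => k < size (H n))); exists n.
exists (fun k => nth DL (H (long k)) k) => n.
apply: (@eq_from_nth _ DL); first by rewrite size_pref.
move=> i lt_i; rewrite nth_pref //; have lt_i' := long_spec _ _ lt_i.
case: (leqP n (long i)) => [/ext[w ->]|/ltnW/ext[w ->]]; by rewrite nth_cat ?lt_i ?lt_i'.
Qed.


Section FiniteTransitions.
Variables (Q S : finType).

Definition trans_tuple (t : trans Q S) := (tsrc t, tlet t, tL t, tR t).
Definition tuple_trans (k : Q * S * Q * Q) : trans Q S :=
  let: (q, a, l, r) := k in Trans q a l r.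
Lemma trans_tupleK : cancel trans_tuple tuple_trans. Proof. by case. Qed.
HB.instance Definition _ := Finite.copy (trans Q S) (can_type trans_tupleK).

End FiniteTransitions.

Section DisjointnessGame.
Variables (Sigma : finType) (A B : npta Sigma).

Definition move := (transition A * transition B)%type.
Definition position := (state A * state B)%type.

Definition legal_move (t : move) :=
  [/\ in_Delta t.1, in_Delta t.2 & tlet t.1 = tlet t.2].
Definition source (t : move) : position := (tsrc t.1, tsrc t.2).
Definition target (t : move) (d : dir) : position := (tgt t.1 d, tgt t.2 d).
Definition both_accepting (f : nat -> move) :=
  trans_seq_acc (A := A) (fun n => (f n).1) /\ trans_seq_acc (A := B) (fun n => (f n).2).

Lemma both_accepting_shift (f g : nat -> move) N K C :
  both_accepting f -> (forall n, N <= n -> g (n + C) = f (n + K)) ->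
  both_accepting g.
Proof.
move=> [accA accB] g_f.
by split; [apply: (parity_acc_shift (N := N) (K := K) (C := C) accA)
          | apply: (parity_acc_shift (N := N) (K := K) (C := C) accB)];
  move=> n /g_f /= ->.
Qed.

Definition play_from (P : transition A -> transition B -> dir) (x : position)
    (dA : nat -> transition A) (dB : nat -> transition B) :=
  (tsrc (dA 0), tsrc (dB 0)) = x /\
  forall i,
    [/\ in_Delta (dA i), in_Delta (dB i), tlet (dA i) = tlet (dB i),
        tsrc (dA i.+1) = tgt (dA i) (P (dA i) (dB i)) &
        tsrc (dB i.+1) = tgt (dB i) (P (dA i) (dB i))].

Definition pf_wins_from P x :=
  forall dA dB, play_from P x dA dB -> pathfinder_wins dA dB.

(* A partial positional strategy fixes Pathfinder's answer on some moves and
   leaves her free on the others. *)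
Definition partial := move -> option dir.
Definition allowed (F : partial) (t : move) (d : dir) :=
  forall d', F t = Some d' -> d = d'.
Definition extends (P : transition A -> transition B -> dir) (F : partial) :=
  forall t d, F t = Some d -> P t.1 t.2 = d.

(* A strategy tree of Automaton answers every history of directions by a move;
   against [F] only the histories allowed by [F] matter. *)
Definition allowed_node (F : partial) (s : seq dir -> move) (u : seq dir) :=
  forall i, i < size u -> allowed F (s (take i u)) (nth DL u i).
Definition allowed_branch (F : partial) (s : seq dir -> move) (pi : nat -> dir) :=
  forall n, allowed F (s (pref pi n)) (pi n).
Definition legal_tree (F : partial) (x : position) (s : seq dir -> move) :=
  source (s [::]) = x /\
  forall u, allowed_node F s u ->
    legal_move (s u) /\
    forall d, allowed F (s u) d -> source (s (rcons u d)) = target (s u) d.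
Definition winning_tree (F : partial) (s : seq dir -> move) :=
  forall pi, allowed_branch F s pi -> both_accepting (fun n => s (pref pi n)).
Definition automaton_wins (F : partial) (x : position) :=
  exists s, legal_tree F x s /\ winning_tree F s.

Definition dichotomy (F : partial) :=
  exists P, extends P F /\ forall x, pf_wins_from P x \/ automaton_wins F x.

Lemma allowed_node_rcons F s u d :
  allowed_node F s (rcons u d) <-> allowed_node F s u /\ allowed F (s u) d.
Proof.
rewrite /allowed_node size_rcons; split.
  move=> ok; split; last by have := ok (size u); rewrite nth_rcons ltnn eqxx
    -cats1 take_size_cat //; apply.
  move=> i lt_i; have := ok i (ltnW lt_i).
  by rewrite nth_rcons lt_i -cats1 takel_cat // ltnW.
move=> [ok_u ok_d] i; rewrite ltnS leq_eqVlt => /orP[/eqP->|lt_i].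
  by rewrite nth_rcons ltnn eqxx -cats1 take_size_cat.
by rewrite nth_rcons lt_i -cats1 takel_cat; [apply: ok_u | apply: ltnW].
Qed.

Lemma allowed_node_cat F s v w :
  allowed_node F s (v ++ w) <->
  allowed_node F s v /\ allowed_node F (fun w => s (v ++ w)) w.
Proof.
elim/last_ind: w => [|w d IH]; first by rewrite cats0; split=> [|[]].
by rewrite -rcons_cat !allowed_node_rcons IH; tauto.
Qed.

Lemma allowed_branch_node F s pi n :
  allowed_branch F s pi -> allowed_node F s (pref pi n).
Proof.
by move=> ok; elim: n => [|n IH] //; rewrite prefS; apply/allowed_node_rcons.
Qed.

Lemma allowed_node_pref F s pi m k :
  allowed_node F s (pref pi m) -> k < m -> allowed F (s (pref pi k)) (pi k).
Proof.
move=> ok lt_k; have := ok k; rewrite size_pref take_pref ?nth_pref ?(ltnW lt_k) //.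
exact.
Qed.

Lemma legal_next F x s u d :
  legal_tree F x s -> allowed_node F s u -> allowed F (s u) d ->
  allowed_node F s (rcons u d) /\ source (s (rcons u d)) = target (s u) d.
Proof.
move=> [_ legal] ok_u ok_d; split; first exact/allowed_node_rcons.
exact: (proj2 (legal u ok_u)).
Qed.

(* Following [P] against a strategy tree of Automaton yields a play; hence a
   positional strategy extending [F] and winning from [x] refutes every winning
   tree against [F] from [x]. *)
Fixpoint reply_history (P : transition A -> transition B -> dir)
    (s : seq dir -> move) (n : nat) : seq dir :=
  if n is n'.+1 then
    let u := reply_history P s n' in rcons u (P (s u).1 (s u).2)
  else [::].

Lemma no_tree_against P F x :
  extends P F -> pf_wins_from P x -> ~ automaton_wins F x.
Proof.
move=> P_F P_wins [s [[s0 legal] win]].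
pose pi n := let u := reply_history P s n in P (s u).1 (s u).2.
have pref_pi n : pref pi n = reply_history P s n.
  by elim: n => [|n IH] //=; rewrite prefS IH.
have ok_pi : allowed_branch F s pi.
  by move=> n d' Fd; rewrite pref_pi in Fd *; exact: P_F.
have [accA accB] := win pi ok_pi.
apply: (P_wins (fun n => (s (pref pi n)).1) (fun n => (s (pref pi n)).2)) => //.
split=> [|i]; first by rewrite -s0.
have [[lA lB lab] next] := legal _ (allowed_branch_node (n := i) ok_pi).
have [eA eB] := next (pi i) (ok_pi i); rewrite -prefS in eA eB.
by split=> //; rewrite ?eA ?eB pref_pi.
Qed.

Definition fix_at (F : partial) (t0 : move) (d : dir) : partial :=
  fun t => if t == t0 then Some d else F t.

Lemma allowed_fix_at F t0 d : allowed (fix_at F t0 d) t0 d.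
Proof. by rewrite /allowed /fix_at eqxx => d' [->]. Qed.

Lemma allowed_fix_at_other F t0 d t e :
  t <> t0 -> allowed (fix_at F t0 d) t e <-> allowed F t e.
Proof. by move/eqP/negbTE => ne; rewrite /allowed /fix_at ne. Qed.

Lemma extends_fix_at P F t0 d :
  F t0 = None -> extends P (fix_at F t0 d) -> extends P F.
Proof.
move=> F_t0 P_F t e Ft; apply: P_F; rewrite /fix_at.
by case: eqP => // eq_t; rewrite eq_t F_t0 in Ft.
Qed.

(* Base case: a total partial strategy is positional; if it does not win from
   [x], a play it loses is a winning strategy tree (depending only on depth). *)
Lemma dichotomy_total F : (forall t, F t <> None) -> dichotomy F.
Proof.
move=> total; pose P a b := odflt DL (F (a, b)).
exists P; split; first by move=> [a b] d /= Fd; rewrite /P Fd.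
move=> x; case: (classic (pf_wins_from P x)) => [|lost]; [by left | right].
have [dA lost_dA] := not_all_ex_not _ _ lost.
have [dB lost_dB] := not_all_ex_not _ _ lost_dA.
have [[start play] /NNPP[accA accB]] := imply_to_and _ _ lost_dB.
exists (fun u => (dA (size u), dB (size u))); split.
  split=> // u _; have [lA lB lab nextA nextB] := play (size u); split=> // d ok_d.
  case F_u: (F (dA (size u), dB (size u))) => [d'|]; last by case: (total _ F_u).
  rewrite (ok_d _ F_u) /source /target /= size_rcons nextA nextB.
  by rewrite /P /= F_u.
move=> pi _.
apply: (both_accepting_shift (f := fun n => (dA n, dB n)) (N := 0) (K := 0) (C := 0)).
  exact: (conj accA accB).
by move=> n _; rewrite /= size_pref.
Qed.

Lemma legal_residual F x s v :
  legal_tree F x s -> allowed_node F s v ->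
  legal_tree F (source (s v)) (fun w => s (v ++ w)).
Proof.
move=> [_ legal] ok_v; split=> [|w ok_w /=]; first by rewrite cats0.
have [legal_vw next] := legal _ (proj2 (allowed_node_cat F s v w) (conj ok_v ok_w)).
by split=> // d ok_d; rewrite -rcons_cat; apply: next.
Qed.

Lemma winning_residual F s v :
  winning_tree F s -> allowed_node F s v -> winning_tree F (fun w => s (v ++ w)).
Proof.
move=> win ok_v pi ok_pi.
have ok_graft : allowed_branch F s (graft v pi).
  move=> n; case: (ltnP n (size v)) => [lt_n | le_n].
    by rewrite pref_graft_short ?(ltnW lt_n) // /graft lt_n; apply: ok_v.
  have -> : n = size v + (n - size v) by rewrite subnKC.
  by rewrite pref_graft_long /graft ltnNge leq_addr /= addKn; apply: ok_pi.
apply: (both_accepting_shift (N := 0) (K := size v) (C := 0) (win _ ok_graft)).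
by move=> n _; rewrite addn0 addnC pref_graft_long.
Qed.

Section AvoidMove.
(* A winning tree against [fix_at F t0 d] never plays [t0]
   (answering it by [d] would lead into a position won by [P]), so it also wins
   against [F]; thus [P] transfers the dichotomy from [fix_at F t0 d] to [F]. *)
Variables (F : partial) (t0 : move) (d : dir).
Variable P : transition A -> transition B -> dir.
Hypothesis F_t0 : F t0 = None.
Hypothesis P_ext : extends P (fix_at F t0 d).
Hypothesis P_wins : pf_wins_from P (target t0 d).

Lemma winning_tree_avoids x s u :
  legal_tree (fix_at F t0 d) x s -> winning_tree (fix_at F t0 d) s ->
  allowed_node (fix_at F t0 d) s u -> s u <> t0.
Proof.
move=> legal win ok_u s_u.
have ok_d : allowed (fix_at F t0 d) (s u) d by rewrite s_u; apply: allowed_fix_at.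
have [ok_ud src_ud] := legal_next legal ok_u ok_d.
apply: (no_tree_against P_ext P_wins); exists (fun w => s (rcons u d ++ w)).
split; last exact: winning_residual.
by have := legal_residual legal ok_ud; rewrite src_ud s_u.
Qed.

Lemma allowed_node_fix_at x s u :
  legal_tree (fix_at F t0 d) x s -> winning_tree (fix_at F t0 d) s ->
  allowed_node F s u -> allowed_node (fix_at F t0 d) s u.
Proof.
move=> legal win; elim/last_ind: u => [//|u e IH].
move/allowed_node_rcons=> [/IH ok_u ok_e]; apply/allowed_node_rcons; split=> //.
exact/allowed_fix_at_other/ok_e/(winning_tree_avoids legal win).
Qed.

Lemma dichotomy_avoid :
  (forall x, pf_wins_from P x \/ automaton_wins (fix_at F t0 d) x) -> dichotomy F.
Proof.
move=> dich; exists P; split; first exact: extends_fix_at P_ext.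
move=> x; case: (dich x) => [|[s [legal win]]]; [by left | right; exists s].
have fix_ok := allowed_node_fix_at legal win.
split; first split; first by case: legal.
  move=> u /fix_ok ok_u; have [legal_u next] := proj2 legal u ok_u.
  split=> // e ok_e; apply: next; apply/allowed_fix_at_other => //.
  exact: (winning_tree_avoids legal win).
move=> pi ok_pi; apply: win => n.
have /fix_ok := allowed_branch_node (n := n.+1) ok_pi.
by rewrite prefS => /allowed_node_rcons[].
Qed.

End AvoidMove.

Section Shuffle.
(* The shuffled tree plays
   [s1] until Pathfinder answers [t0] by R, then [s2] until she answers [t0] by
   L, then [s1] again where it was left, and so on.  Each tree keeps its own
   history, in which an answer to [t0] is recorded as the direction that tree
   expects; the shuffled tree wins from [x] against [F]. *)
Variables (F : partial) (t0 : move) (x : position) (s1 s2 : seq dir -> move).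
Hypothesis legal1 : legal_tree (fix_at F t0 DL) x s1.
Hypothesis win1 : winning_tree (fix_at F t0 DL) s1.
Hypothesis legal2 : legal_tree (fix_at F t0 DR) (target t0 DR) s2.
Hypothesis win2 : winning_tree (fix_at F t0 DR) s2.

Record shuffle_state :=
  ShuffleState { in_first : bool; hist1 : seq dir; hist2 : seq dir }.

Definition current (M : shuffle_state) :=
  if in_first M then s1 (hist1 M) else s2 (hist2 M).

Definition is_left (d : dir) := if d is DL then true else false.

(* An answer to [t0] is recorded as L in the first tree and as R in the
   second, and makes the tree of the chosen direction active. *)
Definition shuffle_step (M : shuffle_state) (d : dir) : shuffle_state :=
  let: ShuffleState b h1 h2 := M in
  if current M == t0 then
    if b then ShuffleState (is_left d) (rcons h1 DL) h2
    else ShuffleState (is_left d) h1 (rcons h2 DR)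
  else if b then ShuffleState true (rcons h1 d) h2
  else ShuffleState false h1 (rcons h2 d).

Definition shuffle_run (u : seq dir) :=
  foldl shuffle_step (ShuffleState true [::] [::]) u.

Definition shuffled (u : seq dir) := current (shuffle_run u).

(* Both histories are allowed, and the inactive tree waits at the successor of
   [t0] in the direction it expects. *)
Definition shuffle_inv (M : shuffle_state) :=
  [/\ allowed_node (fix_at F t0 DL) s1 (hist1 M),
      allowed_node (fix_at F t0 DR) s2 (hist2 M) &
      if in_first M then source (s2 (hist2 M)) = target t0 DR
      else source (s1 (hist1 M)) = target t0 DL].

Lemma shuffle_inv_legal M : shuffle_inv M -> legal_move (current M).
Proof.
case: M => [[] h1 h2] [ok1 ok2 _]; rewrite /current /=.
  exact: (proj1 (proj2 legal1 _ ok1)).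
exact: (proj1 (proj2 legal2 _ ok2)).
Qed.

Lemma shuffle_inv_step M d :
  shuffle_inv M -> allowed F (current M) d ->
  shuffle_inv (shuffle_step M d) /\
  source (current (shuffle_step M d)) = target (current M) d.
Proof.
case: M => [[] h1 h2]; rewrite /shuffle_step /shuffle_inv /current /= => -[ok1 ok2 waiting] ok_d;
  case: eqP => [at_t0 | off_t0].
- have ok_L : allowed (fix_at F t0 DL) (s1 h1) DL by rewrite at_t0; apply: allowed_fix_at.
  have [ok1' src1] := legal_next legal1 ok1 ok_L.
  by rewrite at_t0 in src1 *; case: d {ok_d} => /=; do ?split; assumption.
- have ok_d' : allowed (fix_at F t0 DL) (s1 h1) d by apply/allowed_fix_at_other.
  by have [ok1' src1] := legal_next legal1 ok1 ok_d'; do ?split; assumption.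
- have ok_R : allowed (fix_at F t0 DR) (s2 h2) DR by rewrite at_t0; apply: allowed_fix_at.
  have [ok2' src2] := legal_next legal2 ok2 ok_R.
  by rewrite at_t0 in src2 *; case: d {ok_d} => /=; do ?split; assumption.
- have ok_d' : allowed (fix_at F t0 DR) (s2 h2) d by apply/allowed_fix_at_other.
  by have [ok2' src2] := legal_next legal2 ok2 ok_d'; do ?split; assumption.
Qed.

Lemma shuffle_run_rcons u d :
  shuffle_run (rcons u d) = shuffle_step (shuffle_run u) d.
Proof. by rewrite /shuffle_run foldl_rcons. Qed.

Lemma shuffle_inv_run u : allowed_node F shuffled u -> shuffle_inv (shuffle_run u).
Proof.
elim/last_ind: u => [_ | u d IH /allowed_node_rcons[ok_u ok_d]].
  by split=> //=; case: legal2.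
by rewrite shuffle_run_rcons; apply: (proj1 (shuffle_inv_step (IH ok_u) ok_d)).
Qed.

Lemma shuffled_legal : legal_tree F x shuffled.
Proof.
split; first by case: legal1.
move=> u ok_u; have inv := shuffle_inv_run ok_u.
split=> [|d ok_d]; first exact: shuffle_inv_legal.
by rewrite /shuffled shuffle_run_rcons; apply: (proj2 (shuffle_inv_step inv ok_d)).
Qed.

Lemma shuffle_step_hist M d : exists e,
  hist1 (shuffle_step M d) = hist1 M ++ (if in_first M then [:: e] else [::]) /\
  hist2 (shuffle_step M d) = hist2 M ++ (if in_first M then [::] else [:: e]).
Proof.
case: M => [[] h1 h2]; rewrite /shuffle_step;
  case: (_ == t0); eexists; rewrite /= ?cats0 ?cats1; split; reflexivity.
Qed.

(* Along a branch allowed by [F], the shuffled tree interleaves a branch of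
   [s1] allowed by [fix_at F t0 DL] with a branch of [s2] allowed by
   [fix_at F t0 DR]; so parity conditions satisfied along all such branches of
   [s1] and [s2] are satisfied along the shuffled branch. *)
Lemma shuffled_parity (pr : move -> nat) pi :
  allowed_branch F shuffled pi ->
  (forall pi1, allowed_branch (fix_at F t0 DL) s1 pi1 ->
     parity_acc (fun n => pr (s1 (pref pi1 n)))) ->
  (forall pi2, allowed_branch (fix_at F t0 DR) s2 pi2 ->
     parity_acc (fun n => pr (s2 (pref pi2 n)))) ->
  parity_acc (fun n => pr (shuffled (pref pi n))).
Proof.
move=> ok_pi acc1 acc2.
pose M n := shuffle_run (pref pi n).
have M_S n : M n.+1 = shuffle_step (M n) (pi n) by rewrite /M prefS shuffle_run_rcons.
have inv n : shuffle_inv (M n) by apply/shuffle_inv_run/allowed_branch_node.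
pose c1 n := size (hist1 (M n)); pose c2 n := size (hist2 (M n)).
have c1S n : c1 n.+1 = c1 n + in_first (M n).
  rewrite /c1 M_S; have [e [-> _]] := shuffle_step_hist (M n) (pi n).
  by rewrite size_cat; case: in_first.
have c2S n : c2 n.+1 = c2 n + ~~ in_first (M n).
  rewrite /c2 M_S; have [e [_ ->]] := shuffle_step_hist (M n) (pi n).
  by rewrite size_cat; case: in_first.
have [pi1 M_pi1] : exists pi1, forall n, hist1 (M n) = pref pi1 (c1 n).
  apply: extending_words_branch => n; rewrite M_S.
  by have [e [-> _]] := shuffle_step_hist (M n) (pi n); eexists.
have [pi2 M_pi2] : exists pi2, forall n, hist2 (M n) = pref pi2 (c2 n).
  apply: extending_words_branch => n; rewrite M_S.
  by have [e [_ ->]] := shuffle_step_hist (M n) (pi n); eexists.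
apply: (interleave_parity (b := fun n => in_first (M n)) (c1 := c1) (c2 := c2)
  (g1 := fun k => pr (s1 (pref pi1 k))) (g2 := fun k => pr (s2 (pref pi2 k)))) => //.
- by move=> n; rewrite /shuffled -/(M n) /current M_pi1 M_pi2; case: in_first.
- move=> unb1; apply: acc1 => k; have [n lt_k] := unb1 k.
  by apply: (allowed_node_pref (m := c1 n)); rewrite // -M_pi1; case: (inv n).
- move=> unb2; apply: acc2 => k; have [n lt_k] := unb2 k.
  by apply: (allowed_node_pref (m := c2 n)); rewrite // -M_pi2; case: (inv n).
Qed.

Lemma shuffle_wins : automaton_wins F x.
Proof.
exists shuffled; split=> [|pi ok_pi]; first exact: shuffled_legal.
split.
  apply: (shuffled_parity (pr := fun t => Omega (tsrc t.1))) => // pi' ok_pi'.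
    exact: (proj1 (win1 ok_pi')).
  exact: (proj1 (win2 ok_pi')).
apply: (shuffled_parity (pr := fun t => Omega (tsrc t.2))) => // pi' ok_pi'.
  exact: (proj2 (win1 ok_pi')).
exact: (proj2 (win2 ok_pi')).
Qed.

End Shuffle.

(* Induction along a list covering the moves left open by [F]: fix the first
   open move [t0] both ways.  If the strategy obtained for [fix_at F t0 DR] wins
   from [target t0 DR], it serves for [F] as well; otherwise Automaton wins there
   against [fix_at F t0 DR], and the strategy obtained for [fix_at F t0 DL]
   serves for [F], shuffled trees witnessing Automaton's wins. *)
Lemma dichotomy_cover (l : seq move) F :
  (forall t, F t = None -> t \in l) -> dichotomy F.
Proof.
elim: l F => [|t0 l IH] F cover; first by apply: dichotomy_total => t /cover.
case F_t0: (F t0) => [e|].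
  apply: IH => t Ft; move: (cover t Ft); rewrite in_cons => /orP[/eqP eq_t|//].
  by rewrite eq_t F_t0 in Ft.
have cover_fix d t : fix_at F t0 d t = None -> t \in l.
  by rewrite /fix_at; case: eqP => // ne /cover; rewrite in_cons => /orP[/eqP|].
have [P1 [P1_ext dich1]] := IH _ (cover_fix DL).
have [P2 [P2_ext dich2]] := IH _ (cover_fix DR).
case: (classic (pf_wins_from P2 (target t0 DR))) => [P2_wins | P2_loses].
  exact: (dichotomy_avoid F_t0 P2_ext P2_wins dich2).
have [s2 [legal2 win2]] : automaton_wins (fix_at F t0 DR) (target t0 DR).
  by case: (dich2 (target t0 DR)).
exists P1; split; first exact: extends_fix_at P1_ext.
move=> x; case: (dich1 x) => [|[s1 [legal1 win1]]]; [by left | right].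
exact: shuffle_wins legal1 win1 legal2 win2.
Qed.

Lemma common_tree :
  automaton_wins (fun _ => None) (q0 A, q0 B) ->
  exists t, accepts A t /\ accepts B t.
Proof.
move=> [s [[s0 legal] win]]; case: s0 => s0A s0B.
have free t d : allowed (fun _ => None) t d by [].
have legal_s u := proj1 (legal u (fun i _ => free _ _)).
have next u := proj2 (legal u (fun i _ => free _ _)).
exists (fun u => tlet (s u).1); split.
  exists (fun u => tsrc (s u).1); split=> [|pi]; last exact: (proj1 (win pi _)).
  split=> // u; have [lA _ _] := legal_s u.
  by have [eLA _] := next u DL (free _ _); have [eRA _] := next u DR (free _ _);
    rewrite eLA eRA.
exists (fun u => tsrc (s u).2); split=> [|pi]; last exact: (proj2 (win pi _)).
split=> // u; have [_ lB lab] := legal_s u.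
by have [_ eLB] := next u DL (free _ _); have [_ eRB] := next u DR (free _ _);
  rewrite lab eLB eRB.
Qed.

End DisjointnessGame.

Theorem mainTheorem3 (Sigma : finType) (A B : npta Sigma) :
  productive A -> productive B ->
  (forall t : tree Sigma, ~ (accepts A t /\ accepts B t)) ->
  exists P : transition A -> transition B -> dir,
    forall (dA : nat -> transition A) (dB : nat -> transition B),
      play_following P dA dB -> pathfinder_wins dA dB.
Proof.
move=> _ _ disjoint.
have [P [_ dich]] : dichotomy (fun _ : move A B => None).
  by apply: (dichotomy_cover (l := enum {: move A B})) => t _; rewrite mem_enum.
exists P => dA dB [startA [startB play]].
case: (dich (q0 A, q0 B)) => [P_wins | /common_tree[t accepted]].
  by apply: P_wins; split; [rewrite startA startB | exact: play].
by case: (disjoint t).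
Qed.
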